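(* Let $\mathcal{G}$ be a finite set of classes, let $\alpha>1$, and let $f:\mathbb{R}^{q\times n}\to\mathbb{R}^n$ be an $(R, D_\alpha, \gamma, \beta, k, \|\cdot\|)$-faithful attention module for a ViT. Fix an input $x$, and for each class $i$ let $p_i$ be the probability that the prediction distribution $\bar{y}(x)$ returns the $i$-th class; let $p_{(1)}$ and $p_{(2)}$ be the largest and second largest values among $\{p_i\}$. If $$\gamma \leq -\log\Big(1 - p_{(1)} - p_{(2)} + 2\big(\tfrac{1}{2}(p_{(1)}^{1-\alpha} + p_{(2)}^{1-\alpha})\big)^{\frac{1}{1-\alpha}}\Big),$$ then for all $x'$ with $\|x-x'\|\leq R$ we have $\arg\max_{g\in\mathcal{G}}\mathbb{P}(\bar{y}(x)=g)=\arg\max_{g\in\mathcal{G}}\mathbb{P}(\bar{y}(x')=g)$.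
   Context: A Vision Transformer (ViT) takes an input image represented as a token-embedding matrix $x\in\mathbb{R}^{q\times n}$ ($n$ patches, each embedded in $\mathbb{R}^q$). An attention module is a map $f:\mathbb{R}^{q\times n}\to\mathbb{R}^n$ producing an attention vector; the ViT's later layers map the attention-based representation to a prediction distribution $\bar{y}(x)$ over the class set $\mathcal{G}$ (written $\bar y(x)$ when it is based on $f(x)$). For $v\in\mathbb{R}^n$, the top-$k$ set is $T_k(v)=\{i\in[n]: |\{j\in[n]: v_j\geq v_i\}|\leq k\}$, and for $v,v'\in\mathbb{R}^n$ the top-$k$ overlap ratio is $V_k(v,v')=\frac{1}{k}|T_k(v)\cap T_k(v')|$. For distributions $P,Q$ and $\alpha\in(1,\infty)$, the $\alpha$-Rényi divergence is $D_\alpha(P\|Q)=\frac{1}{\alpha-1}\log\mathbb{E}_{x\sim Q}\big(\frac{P(x)}{Q(x)}\big)^\alpha$. A function $f:\mathbb{R}^{q\times n}\to\mathbb{R}^n$ is an $(R,D,\gamma,\beta,k,\|\cdot\|)$-faithful attention module for ViTs (with $0<\beta<1$, $D$ a divergence between distributions, $\|\cdot\|$ a norm on $\mathbb{R}^{q\times n}$) if for every input $x$ and every $x'$ with $\|x-x'\|\leq R$: (1) (top-$k$ robustness) $V_k(f(x'),f(x))\geq\beta$; and (2) (prediction robustness) $D(\bar{y}(x),\bar{y}(x'))\leq\gamma$, where $\bar{y}(x),\bar{y}(x')$ are the ViT's prediction distributions based on $f(x), f(x')$. *)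

From HB Require Import structures.
From mathcomp Require Import all_boot all_order all_algebra.
From mathcomp Require Import reals constructive_ereal ereal exp.
Set Implicit Arguments. Unset Strict Implicit. Unset Printing Implicit Defensive.
Import Order.TTheory GRing.Theory Num.Theory.
Local Open Scope ring_scope.

Section Defs.
Variable R : realType.

Definition is_norm (q n : nat) (N : 'M[R]_(q, n) -> R) : Prop :=
  [/\ forall x, 0 <= N x,
      forall x, N x = 0 -> x = 0,
      forall (a : R) x, N (a *: x) = `|a| * N x
    & forall x y, N (x + y) <= N x + N y].

Definition is_distr (G : finType) (P : {ffun G -> R}) : Prop :=
  (forall g, 0 <= P g) /\ \sum_(g : G) P g = 1.

Definition topk (n k : nat) (v : 'rV[R]_n) : {set 'I_n} :=
  [set i : 'I_n | leq #|[set j : 'I_n | v ord0 i <= v ord0 j]| k].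

Definition topk_overlap (n k : nat) (v v' : 'rV[R]_n) : R :=
  (#|topk k v :&: topk k v'|)%:R / k%:R.

Definition renyi_div (G : finType) (alpha : R) (P Q : {ffun G -> R}) : \bar R :=
  if [exists g, (Q g == 0) && (P g != 0)] then +oo%E
  else ((alpha - 1)^-1 *
        ln (\sum_(g : G | Q g != 0) Q g * (P g / Q g) `^ alpha))%:E.

(* (R, D, gamma, beta, k, N)-faithful attention module f, where the ViT's
   prediction distribution based on f(x) is  head x (f x). *)
Definition faithful_attention (q n : nat) (G : finType)
    (head : 'M[R]_(q, n) -> 'rV[R]_n -> {ffun G -> R})
    (Rad : R) (D : {ffun G -> R} -> {ffun G -> R} -> \bar R)
    (gamma beta : R) (k : nat) (N : 'M[R]_(q, n) -> R)
    (f : 'M[R]_(q, n) -> 'rV[R]_n) : Prop :=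
  0 < beta < 1 /\
  forall x x' : 'M[R]_(q, n), N (x - x') <= Rad ->
    beta <= topk_overlap k (f x') (f x) /\
    (D (head x (f x)) (head x' (f x')) <= gamma%:E)%E.

Definition sorted_probs (G : finType) (P : {ffun G -> R}) : seq R :=
  sort (fun a b : R => b <= a) [seq P g | g <- enum G].

Definition p_top1 (G : finType) (P : {ffun G -> R}) : R := nth 0 (sorted_probs P) 0.
Definition p_top2 (G : finType) (P : {ffun G -> R}) : R := nth 0 (sorted_probs P) 1.

(* power mean (1/2 (a^(1-alpha) + b^(1-alpha)))^(1/(1-alpha)) with the standard
   convention (limit) that it is 0 when one argument is 0 (exponent 1-alpha < 0). *)
Definition pmean (alpha a b : R) : R :=
  if (a == 0) || (b == 0) then 0
  else (2^-1 * (a `^ (1 - alpha) + b `^ (1 - alpha))) `^ (1 - alpha)^-1.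

Definition renyi_bound (alpha p1 p2 : R) : \bar R :=
  let a := 1 - p1 - p2 + 2 * pmean alpha p1 p2 in
  if a == 0 then +oo%E else (- ln a)%:E.

Definition is_argmax (G : finType) (P : {ffun G -> R}) (g : G) : Prop :=
  forall h, P h <= P g.

End Defs.

From HB Require Import structures.
From mathcomp Require Import all_boot all_order all_algebra.
From mathcomp Require Import reals constructive_ereal ereal exp.
From mathcomp Require Import ring lra.
Set Implicit Arguments. Unset Strict Implicit. Unset Printing Implicit Defensive.
Import Order.TTheory GRing.Theory Num.Theory.
Local Open Scope ring_scope.

(* Let [P = ybar(x)], [Q = ybar(x')] and let [g] be a top class of [P]. If [Q h > Q g] for
   some [h], then [sum_i P_i^(1-alpha) Q_i^alpha > W^(1-alpha)] for
   [W = 1 - P g - P h + 2 M(P g, P h)], [M] the power mean of exponent [1 - alpha]: the pair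
   [g, h] is handled by rearrangement and strict convexity of [t^alpha], the other classes by
   Jensen's inequality for the perspective [p (q / p)^alpha]. Hence [D_alpha(Q || P) > - ln W].
   As [P h <= p_(2)] and [t |-> 2 M(P g, t) - t] is nondecreasing, [- ln W] is at least the
   bound of the statement, so [D_alpha(Q || P) > gamma], contradicting prediction robustness. *)

Section PowerInequalities.
Variable R : realType.
Implicit Types a k r u v w x y : R.

Lemma lt0_ger_powR r u v : r < 0 -> 0 < u -> u <= v -> v `^ r <= u `^ r.
Proof.
move=> r0 u0 uv; have inv z : z `^ r = (z `^ (- r))^-1 by rewrite -powRN opprK.
rewrite !inv lef_pV2 ?posrE ?powR_gt0 //; last lra.
by apply: ge0_ler_powR; rewrite ?nnegrE; lra.
Qed.

Lemma powR_tangent_scale r v w : 0 < v -> 0 <= w ->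
  v `^ r + r * v `^ (r - 1) * (w - v) = v `^ r * (1 + r * (w / v - 1)) /\
  w `^ r = v `^ r * (w / v) `^ r.
Proof.
move=> v0 w0; split.
  rewrite powRB ?(gt_eqF v0) ?implybT // powRr1 ?ltW //.
  by field; rewrite gt_eqF.
rewrite -powRM ?(ltW v0) ?divr_ge0 ?(ltW v0) //.
by rewrite mulrC divfK ?gt_eqF.
Qed.

(* Young's inequality [u * 1 <= u^a / a + 1 / a'] for the conjugate exponent [a'] of [a]. *)
Lemma bernoulli_powR a u : 1 < a -> 0 <= u -> 1 + a * (u - 1) <= u `^ a.
Proof.
move=> a1 u0.
have a0 : 0 < a by lra.
have a'0 : 0 < a / (a - 1) by apply: divr_gt0; lra.
have conj_exp : a^-1 + (a / (a - 1))^-1 = 1.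
  by field; apply/andP; split; apply/eqP; lra.
have := conjugate_powR u0 ler01 a0 a'0 conj_exp.
rewrite powR1 mulr1 -(ler_pM2r a0) mulrDl mulfVK ?gt_eqF //.
have -> : 1 / (a / (a - 1)) * a = a - 1 by field; apply/andP; split; apply/eqP; lra.
lra.
Qed.

Lemma powR_tangent_le a v w : 1 < a -> 0 < v -> 0 <= w ->
  v `^ a + a * v `^ (a - 1) * (w - v) <= w `^ a.
Proof.
move=> a1 v0 w0; have [-> ->] := powR_tangent_scale a v0 w0.
by rewrite ler_pM2l ?powR_gt0 // bernoulli_powR // divr_ge0 // ltW.
Qed.

(* Tangent at the midpoint [m] of [1] and [u]: the gain over [1 + a (u - 1)] is
   [a (u - 1) (m^(a-1) - 1) / 2], and both factors have the sign of [u - 1]. *)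
Lemma bernoulli_powR_lt a u : 1 < a -> 0 <= u -> u != 1 -> 1 + a * (u - 1) < u `^ a.
Proof.
move=> a1 u0 u1; set m := (1 + u) / 2.
have m0 : 0 < m by rewrite /m; lra.
have tangent := powR_tangent_le a1 m0 u0.
have bern := bernoulli_powR a1 (ltW m0).
have a10 : 0 < a - 1 by lra.
have m_nneg : m \is Num.nneg by rewrite nnegrE ltW.
have one_nneg : (1 : R) \is Num.nneg by rewrite nnegrE.
have gain : 0 < a * ((u - 1) * (m `^ (a - 1) - 1)).
  apply: mulr_gt0; first lra.
  have [u_lt1|u_gt1|] := ltgtP u 1; last by move/eqP; rewrite (negPf u1).
  - have := gt0_ltr_powR a10 m_nneg one_nneg (ltac:(rewrite /m; lra) : m < 1).
    by rewrite powR1 /=; nra.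
  - have := gt0_ltr_powR a10 one_nneg m_nneg (ltac:(rewrite /m; lra) : 1 < m).
    by rewrite powR1 /=; nra.
rewrite /m in tangent bern gain; lra.
Qed.

Lemma powR_tangent_lt a v w : 1 < a -> 0 < v -> 0 <= w -> w != v ->
  v `^ a + a * v `^ (a - 1) * (w - v) < w `^ a.
Proof.
move=> a1 v0 w0 wv; have [-> ->] := powR_tangent_scale a v0 w0.
rewrite ltr_pM2l ?powR_gt0 //; apply: bernoulli_powR_lt => //.
  exact: divr_ge0 w0 (ltW v0).
have v_neq0 : v != 0 by rewrite gt_eqF.
by apply: contraNneq wv => wv1; rewrite -(divfK v_neq0 w) wv1 mul1r.
Qed.

Lemma powR_midpoint_lt a x y : 1 < a -> 0 <= x -> 0 <= y -> x != y ->
  ((x + y) / 2) `^ a < (x `^ a + y `^ a) / 2.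
Proof.
move=> a1 x0 y0 xy; set m := (x + y) / 2.
have m0 : 0 < m.
  suff : 0 < x + y by rewrite /m; lra.
  rewrite lt_neqAle addr_ge0 // andbT eq_sym paddr_eq0 //.
  by apply: contraNN xy => /andP[/eqP -> /eqP ->].
have xm : x != m by apply: contraNneq xy; rewrite /m => ?; lra.
have ym : y != m by apply: contraNneq xy; rewrite /m => ?; lra.
have := powR_tangent_lt a1 m0 x0 xm; have := powR_tangent_lt a1 m0 y0 ym.
rewrite /m; lra.
Qed.

(* For a negative exponent, Bernoulli's inequality at [u] is the one for [1 - k > 1] at [1 / u]. *)
Lemma bernoulli_powR_neg k u : k < 0 -> 0 < u -> 1 + k * (u - 1) <= u `^ k.
Proof.
move=> k0 u0.
have u'0 : 0 <= u^-1 by rewrite invr_ge0 ltW.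
have := bernoulli_powR (ltac:(lra) : 1 < 1 - k) u'0.
have -> : u `^ k = u * u^-1 `^ (1 - k).
  rewrite -powR_inv1 ?ltW // -powRrM -{2}(powRr1 (ltW u0)).
  by rewrite -powRD ?(gt_eqF u0) ?implybT //; congr (_ `^ _); ring.
have -> : 1 + k * (u - 1) = u * (1 + (1 - k) * (u^-1 - 1)) by field; rewrite gt_eqF.
by rewrite ler_pM2l.
Qed.

Lemma powR_tangent_neg k v w : k < 0 -> 0 < v -> 0 < w ->
  v `^ k + k * v `^ (k - 1) * (w - v) <= w `^ k.
Proof.
move=> k0 v0 w0; have [-> ->] := powR_tangent_scale k v0 (ltW w0).
by rewrite ler_pM2l ?powR_gt0 // bernoulli_powR_neg // divr_gt0.
Qed.

End PowerInequalities.

Section SupportingLines.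
Variables (R : realFieldType) (g g' : R -> R).
Hypothesis g_tangent : forall v w, 0 < v -> 0 < w -> g v + g' v * (w - v) <= g w.

Lemma chord_le a v x : 0 < a -> a <= v -> v <= x ->
  (x - a) * g v <= (x - v) * g a + (v - a) * g x.
Proof.
move=> a0 av vx; have v0 : 0 < v by lra.
have ta := ler_wpM2l (ltac:(lra) : 0 <= x - v) (g_tangent v0 a0).
have tx := ler_wpM2l (ltac:(lra) : 0 <= v - a) (g_tangent v0 (ltac:(lra) : 0 < x)).
nra.
Qed.

(* Karamata for the triples [(x, A, A)] and [(y, B, B)], with [A <= B] the midpoints of
   [X] with [y] and [x]: it is [2 * chord(A, B, x) + chord(A, y, x)]. *)
Lemma midpoint_exchange_le X y x : 0 < X -> X <= y -> y <= x ->
  2 * g (2^-1 * (X + x)) + g y <= 2 * g (2^-1 * (X + y)) + g x.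
Proof.
move=> X0 Xy yx; set A := 2^-1 * (X + y); set B := 2^-1 * (X + x).
have [Ax|xA] := ltP A x; last first.
  rewrite /A /B in xA *; have [-> ->] : X = x /\ y = x by lra.
  lra.
have A0 : 0 < A by rewrite /A; lra.
have cB := chord_le A0 (ltac:(rewrite /A /B; lra) : A <= B) (ltac:(rewrite /B; lra) : B <= x).
have cy := chord_le A0 (ltac:(rewrite /A; lra) : A <= y) yx.
have xA0 : 0 < x - A by rewrite subr_gt0.
rewrite -(ler_pM2l xA0); move: cB cy; rewrite /A /B; lra.
Qed.

End SupportingLines.

Section PowerMean.
Variables (R : realType) (alpha : R).

Lemma pmean_pos a b : 0 < a -> 0 < b ->
  pmean alpha a b = (2^-1 * (a `^ (1 - alpha) + b `^ (1 - alpha))) `^ (1 - alpha)^-1.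
Proof. by move=> a0 b0; rewrite /pmean !gt_eqF. Qed.

Lemma pmean_gt0 a b : 0 < a -> 0 < b -> 0 < pmean alpha a b.
Proof. by move=> a0 b0; rewrite pmean_pos // powR_gt0 // mulr_gt0 ?addr_gt0 ?powR_gt0. Qed.

Lemma pmean_powR a b : 1 < alpha -> 0 < a -> 0 < b ->
  pmean alpha a b `^ (1 - alpha) = 2^-1 * (a `^ (1 - alpha) + b `^ (1 - alpha)).
Proof.
move=> a1 a0 b0; rewrite pmean_pos // -powRrM mulVf ?subr_eq0 ?lt_eqF //.
by rewrite powRr1 // mulr_ge0 ?addr_ge0 ?powR_ge0.
Qed.

(* [t |-> 2 M(p, t) - t] is nondecreasing on [(0, p]]: in the variable [z = t^(1-alpha)],
   [M(p, t) = m((p^(1-alpha) + z) / 2)] for the convex [m z = z^(1/(1-alpha))]. *)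
Lemma pmean_shift_le p t t' : 1 < alpha -> 0 < t -> t <= t' -> t' <= p ->
  2 * pmean alpha p t - t <= 2 * pmean alpha p t' - t'.
Proof.
move=> a1 t0 tt' t'p; have t'0 : 0 < t' by lra.
have p0 : 0 < p by lra.
rewrite !pmean_pos //.
set b := 1 - alpha; set k := b^-1.
have b0 : b < 0 by rewrite /b; lra.
have k0 : k < 0 by rewrite invr_lt0.
have root z : 0 < z -> (z `^ b) `^ k = z.
  by move=> z0; rewrite -powRrM mulfV ?lt_eqF // powRr1 // ltW.
have := @midpoint_exchange_le R (fun z => z `^ k) (fun v => k * v `^ (k - 1))
  (fun v w => @powR_tangent_neg R k v w k0) (p `^ b) (t' `^ b) (t `^ b)
  (powR_gt0 _ p0) (lt0_ger_powR b0 t'0 t'p)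
  (lt0_ger_powR b0 t0 tt').
rewrite /= !root //.
move: (_ `^ k) (_ `^ k) => Mt Mt'; lra.
Qed.

End PowerMean.

Section Perspective.
Variables (R : realType) (alpha : R).

(* The perspective of [t |-> t^alpha]; [persp 0 q = 0] for every [q], whence the support
   hypotheses below. *)
Definition persp (p q : R) : R := p * (q / p) `^ alpha.

Lemma persp0 q : persp 0 q = 0.
Proof. by rewrite /persp mul0r. Qed.

Lemma persp_ge0 p q : 0 <= p -> 0 <= persp p q.
Proof. by move=> p0; rewrite mulr_ge0 ?powR_ge0. Qed.

Lemma perspZ c p q : c != 0 -> persp (c * p) (c * q) = c * persp p q.
Proof. by move=> c0; rewrite /persp invfM mulrACA mulfV // mul1r mulrA. Qed.

Lemma perspE p q : 0 < p -> 0 <= q -> persp p q = p `^ (1 - alpha) * q `^ alpha.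
Proof.
move=> p0 q0; have p_ge0 := ltW p0.
have -> : p `^ (1 - alpha) = p * p `^ (-1 * alpha).
  rewrite -{2}(powRr1 p_ge0) -powRD ?(gt_eqF p0) ?implybT //.
  by congr (_ `^ _); ring.
rewrite /persp powRM ?invr_ge0 // -powR_inv1 // -powRrM; ring.
Qed.

Lemma persp_tangent_le p q l : 1 < alpha -> 0 < p -> 0 <= q -> 0 <= l ->
  l `^ alpha * p + alpha * l `^ (alpha - 1) * (q - l * p) <= persp p q.
Proof.
move=> a1 p0 q0; rewrite le_eqVlt => /predU1P[<-|l0].
  have a0 : alpha != 0 by rewrite gt_eqF //; lra.
  have a10 : alpha - 1 != 0 by rewrite subr_eq0 gt_eqF.
  by rewrite !powR0 // !(mul0r, mulr0) add0r persp_ge0 // ltW.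
have -> : l `^ alpha * p + alpha * l `^ (alpha - 1) * (q - l * p) =
    p * (l `^ alpha + alpha * l `^ (alpha - 1) * (q / p - l)).
  by field; rewrite gt_eqF.
by rewrite /persp ler_pM2l // powR_tangent_le // divr_ge0 // ltW.
Qed.

(* Tangent lines of [t^alpha] at the common ratio [l = (q1 + q2) / (p1 + p2)]. *)
Lemma persp_add_le p1 p2 q1 q2 : 1 < alpha ->
  0 <= p1 -> 0 <= p2 -> 0 <= q1 -> 0 <= q2 -> (p1 = 0 -> q1 = 0) -> (p2 = 0 -> q2 = 0) ->
  persp (p1 + p2) (q1 + q2) <= persp p1 q1 + persp p2 q2.
Proof.
move=> a1; rewrite le_eqVlt => /predU1P[<- _ _ _ /(_ erefl) -> _|p1_gt0].
  by rewrite !add0r persp0 add0r.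
rewrite le_eqVlt => /predU1P[<- _ _ _ /(_ erefl) ->|p2_gt0 q1_ge0 q2_ge0 _ _].
  by rewrite !addr0 persp0 addr0.
set l := (q1 + q2) / (p1 + p2).
have l0 : 0 <= l by apply: divr_ge0; lra.
have tangent1 := persp_tangent_le a1 p1_gt0 q1_ge0 l0.
have tangent2 := persp_tangent_le a1 p2_gt0 q2_ge0 l0.
have -> : persp (p1 + p2) (q1 + q2) = l `^ alpha * (p1 + p2) by rewrite /persp mulrC.
have slope : alpha * l `^ (alpha - 1) * (q1 + q2 - l * (p1 + p2)) = 0.
  by rewrite /l divfK ?subrr ?mulr0 // gt_eqF ?addr_gt0.
lra.
Qed.

Lemma persp_sum_le (I : Type) (r : seq I) (P : pred I) (p q : I -> R) : 1 < alpha ->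
  (forall i, 0 <= p i) -> (forall i, 0 <= q i) -> (forall i, p i = 0 -> q i = 0) ->
  persp (\sum_(i <- r | P i) p i) (\sum_(i <- r | P i) q i) <=
    \sum_(i <- r | P i) persp (p i) (q i).
Proof.
move=> a1 p0 q0 pq.
pose K s B A := [/\ 0 <= B, 0 <= A, B = 0 -> A = 0 & persp B A <= s].
suff [] : K (\sum_(i <- r | P i) persp (p i) (q i))
    (\sum_(i <- r | P i) p i) (\sum_(i <- r | P i) q i) by [].
apply: (big_rec3 K); first by split; rewrite ?persp0.
move=> i s B A _ [B0 A0 BA le_s].
split; [exact: addr_ge0 (p0 i) B0 | exact: addr_ge0 (q0 i) A0 | |].
  by move/eqP; rewrite paddr_eq0 // => /andP[/eqP/pq -> /eqP/BA ->]; rewrite addr0.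
apply: le_trans (persp_add_le a1 (p0 i) B0 (q0 i) A0 (@pq i) BA) _.
by rewrite lerD2l.
Qed.

(* Here [persp p q = p^(1-alpha) q^alpha] with weights [pg^(1-alpha) <= ph^(1-alpha)]; by
   rearrangement and then strict convexity, the right-hand side exceeds
   [(pg^(1-alpha) + ph^(1-alpha)) ((qg + qh) / 2)^alpha], which is the left-hand side. *)
Lemma persp_pair_lt pg ph qg qh : 1 < alpha -> 0 < ph -> ph <= pg -> 0 <= qg -> qg < qh ->
  persp (2 * pmean alpha pg ph) (qg + qh) < persp pg qg + persp ph qh.
Proof.
move=> a1 ph0 phg qg0 qgh; have pg0 : 0 < pg by lra.
have qh0 : 0 <= qh by lra.
have -> : qg + qh = 2 * ((qg + qh) / 2) by field.
have m0 : 0 <= (qg + qh) / 2 by lra.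
rewrite perspZ // perspE ?pmean_gt0 // pmean_powR // !perspE //.
set u := pg `^ (1 - alpha); set v := ph `^ (1 - alpha).
have uv : u <= v by apply: lt0_ger_powR => //; lra.
have u0 : 0 < u by apply: powR_gt0.
have fgh : qg `^ alpha <= qh `^ alpha.
  by apply: ge0_ler_powR; rewrite ?nnegrE //; lra.
have qg_neq : qg != qh by rewrite lt_eqF.
have := powR_midpoint_lt a1 qg0 qh0 qg_neq.
rewrite -(ltr_pM2l (ltac:(lra) : 0 < u + v)).
have : 0 <= (v - u) * (qh `^ alpha - qg `^ alpha) by apply: mulr_ge0; lra.
lra.
Qed.

End Perspective.

Lemma bigD2 (I : finType) (V : nmodType) (F : I -> V) i j : j != i ->
  \sum_k F k = F i + F j + \sum_(k | (k != i) && (k != j)) F k.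
Proof. by move=> ji; rewrite (bigD1 i) // (bigD1 j) //= addrA. Qed.

Section TopProbabilities.
Variables (R : realType) (G : finType).
Implicit Types P : {ffun G -> R}.

Lemma argmax_distr_gt0 P g : is_distr P -> is_argmax P g -> 0 < P g.
Proof.
move=> [P0 P1] Pg; rewrite lt_neqAle P0 andbT; apply/eqP => Pg0.
have : \sum_i P i = 0 by apply: big1 => i _; apply/le_anti; rewrite P0 andbT Pg0 Pg.
by rewrite P1 => /eqP; rewrite oner_eq0.
Qed.

Lemma distr_pair_le1 P g h : is_distr P -> h != g -> P g + P h <= 1.
Proof.
move=> [P0 P1] hg; rewrite -P1 (bigD2 _ hg) lerDl.
by apply: sumr_ge0 => i _.
Qed.

Lemma p_top_argmax P g h : is_argmax P g -> h != g ->
  [/\ p_top1 P = P g, P h <= p_top2 P & p_top2 P <= P g].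
Proof.
move=> Pg hg; rewrite /p_top1 /p_top2 /sorted_probs.
set ge := fun a b : R => b <= a.
have ge_tr : transitive ge by move=> a b c ab bc; exact: le_trans bc ab.
have sorted_s := sort_sorted (fun a b => le_total b a : ge a b || ge b a) [seq P i | i <- enum G].
have perm : perm_eq (sort ge [seq P i | i <- enum G])
    (P g :: [seq P i | i <- rem g (enum G)]).
  by rewrite perm_sort -map_cons perm_map // perm_to_rem // mem_enum.
case: (sort ge _) perm sorted_s => [/perm_size //|x0 s] perm /= sorted_s.
have x0_le : x0 <= P g.
  move: (perm_mem perm x0); rewrite mem_head in_cons => /esym/orP[/eqP -> //|].
  by case/mapP=> i _ ->.
have x0E : x0 = P g.
  apply/le_anti; rewrite x0_le /=.
  move: (perm_mem perm (P g)); rewrite mem_head in_cons => /orP[/eqP -> //|].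
  by move/(allP (order_path_min ge_tr sorted_s)).
rewrite x0E perm_cons in perm sorted_s *.
have Ph_in : P h \in s.
  by rewrite (perm_mem perm) map_f // (mem_rem_uniq _ (enum_uniq G)) inE hg mem_enum.
case: s Ph_in sorted_s {perm} => [//|x1 s] Ph_in /= /andP[x1_le sorted_s]; split => //.
move: Ph_in; rewrite in_cons => /orP[/eqP -> //|].
by move/(allP (order_path_min ge_tr sorted_s)).
Qed.

End TopProbabilities.

Section RenyiFlip.
Variables (R : realType) (G : finType) (alpha : R).
Implicit Types P Q : {ffun G -> R}.

Lemma renyi_div_le_finite P Q (gamma : R) : (renyi_div alpha Q P <= gamma%:E)%E ->
  (forall i, P i = 0 -> Q i = 0) /\
  (alpha - 1)^-1 * ln (\sum_i persp alpha (P i) (Q i)) <= gamma.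
Proof.
rewrite /renyi_div; case: ifPn => [_|supp]; first by rewrite leNgt ltey.
rewrite lee_fin big_rmcond => [HD|i /negPn/eqP ->]; last by rewrite mul0r.
split=> // i Pi0; move/existsPn: supp => /(_ i).
by rewrite Pi0 eqxx /= negbK => /eqP.
Qed.

(* [W^(1 - alpha)], with [W = 1 - P g - P h + 2 M], is the value at the cheapest [Q] with
   [Q g = Q h]: it puts [M / W] on [g] and [h] and [P i / W] on every other class. *)
Lemma renyi_sum_flip_gt P Q g h : 1 < alpha -> is_distr P -> is_distr Q ->
  (forall i, P i = 0 -> Q i = 0) -> h != g -> 0 < P h -> P h <= P g -> Q g < Q h ->
  (1 - P g - P h + 2 * pmean alpha (P g) (P h)) `^ (1 - alpha) <
    \sum_i persp alpha (P i) (Q i).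
Proof.
move=> a1 Pd Qd supp hg Ph0 hle Qgh; have [[P0 P1] [Q0 Q1]] := (Pd, Qd).
have Prest : 0 <= 1 - P g - P h by have := distr_pair_le1 Pd hg; lra.
have Qrest : 0 <= 1 - Q g - Q h by have := distr_pair_le1 Qd hg; lra.
have M0 : 0 < pmean alpha (P g) (P h) by rewrite pmean_gt0 //; lra.
set M := pmean alpha (P g) (P h) in M0 *.
set rest := fun i => (i != g) && (i != h).
have [TP_def TQ_def] : \sum_(i | rest i) P i = 1 - P g - P h /\
    \sum_(i | rest i) Q i = 1 - Q g - Q h.
  by move: P1 Q1; rewrite !(bigD2 _ hg); split; lra.
have TPQ : 1 - P g - P h = 0 -> 1 - Q g - Q h = 0.
  rewrite -TP_def -TQ_def => /(psumr_eq0P (fun i _ => P0 i)) TP0.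
  by apply: big1 => i /TP0/supp.
have jensen := persp_sum_le (index_enum G) rest a1 P0 Q0 supp.
rewrite TP_def TQ_def in jensen.
have pair := persp_pair_lt a1 Ph0 hle (Q0 g) Qgh.
have add := persp_add_le a1 (ltac:(lra) : 0 <= 2 * M) Prest
  (addr_ge0 (Q0 g) (Q0 h)) Qrest (ltac:(lra)) TPQ.
have W_persp : persp alpha (2 * M + (1 - P g - P h)) (Q g + Q h + (1 - Q g - Q h)) =
    (1 - P g - P h + 2 * M) `^ (1 - alpha).
  rewrite (_ : Q g + Q h + _ = 1); last ring.
  by rewrite perspE ?powR1 ?mulr1; [congr (_ `^ _); ring | lra | lra].
rewrite (bigD2 _ hg); lra.
Qed.

Lemma renyi_argmax_stable (gamma : R) P Q g : 1 < alpha -> is_distr P -> is_distr Q ->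
  (renyi_div alpha Q P <= gamma%:E)%E ->
  (gamma%:E <= renyi_bound alpha (p_top1 P) (p_top2 P))%E ->
  is_argmax P g -> is_argmax Q g.
Proof.
move=> a1 Pd Qd /renyi_div_le_finite[supp HD] Hb Pg h.
rewrite leNgt; apply/negP => Qgh.
have hg : h != g by apply: contraTneq Qgh => ->; rewrite ltxx.
have Pg0 := argmax_distr_gt0 Pd Pg.
have Ph0 : 0 < P h.
  rewrite lt_neqAle (proj1 Pd) andbT; apply: contraTneq Qgh => /esym/supp ->.
  by rewrite -leNgt (proj1 Qd).
have [top1 Ph_le top2_le] := p_top_argmax Pg hg.
move: Hb; rewrite /renyi_bound top1.
move: (p_top2 P) Ph_le top2_le => p2 Ph_le p2_le Hb.
have W0 : 0 < 1 - P g - P h + 2 * pmean alpha (P g) (P h).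
  by have := distr_pair_le1 Pd hg; have := pmean_gt0 alpha Pg0 Ph0; lra.
have W_le := pmean_shift_le a1 Ph0 Ph_le p2_le.
set M := pmean alpha (P g) (P h) in W0 W_le *; set M2 := pmean alpha (P g) p2 in W_le Hb.
have W_W2 : 1 - P g - P h + 2 * M <= 1 - P g - p2 + 2 * M2 by lra.
have W2_0 := lt_le_trans W0 W_W2.
move: Hb; rewrite (gt_eqF W2_0) lee_fin => Hb.
have := renyi_sum_flip_gt a1 Pd Qd supp hg Ph0 (Pg h) Qgh.
set W := 1 - P g - P h + 2 * M in W0 W_W2 *.
set W2 := 1 - P g - p2 + 2 * M2 in W_W2 W2_0 Hb.
set S := \sum_i persp alpha (P i) (Q i) in HD * => WS.
clearbody W W2 S.
have Wb0 : 0 < W `^ (1 - alpha) by apply: powR_gt0.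
have lnWS : (1 - alpha) * ln W < ln S.
  by rewrite -ln_powR ltr_ln ?posrE // (lt_trans Wb0 WS).
have lnW : ln W <= ln W2 by rewrite ler_ln ?posrE.
have lnS : - ln W < (alpha - 1)^-1 * ln S.
  have -> : - ln W = (alpha - 1)^-1 * ((1 - alpha) * ln W).
    by field; rewrite subr_eq0 gt_eqF.
  by rewrite ltr_pM2l // invr_gt0 subr_gt0.
have lnW' : - ln W2 <= - ln W by rewrite lerN2.
by have := lt_le_trans lnS (le_trans HD (le_trans Hb lnW')); rewrite ltxx.
Qed.

End RenyiFlip.

Theorem theorem1 (R : realType) (q n : nat) (G : finType) (alpha : R)
    (head : 'M[R]_(q, n) -> 'rV[R]_n -> {ffun G -> R})
    (Rad gamma beta : R) (k : nat) (N : 'M[R]_(q, n) -> R)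
    (f : 'M[R]_(q, n) -> 'rV[R]_n) (x : 'M[R]_(q, n)) :
  1 < alpha ->
  is_norm N ->
  (forall x0 v, is_distr (head x0 v)) ->
  faithful_attention head Rad (fun P Q => renyi_div alpha Q P) gamma beta k N f ->
  (gamma%:E <= renyi_bound alpha (p_top1 (head x (f x))) (p_top2 (head x (f x))))%E ->
  forall x' : 'M[R]_(q, n), N (x - x') <= Rad ->
    forall g : G, is_argmax (head x (f x)) g -> is_argmax (head x' (f x')) g.
Proof.
move=> a1 _ distr [_ faithful] bound x' near_x g.
have [_ div_le] := faithful x x' near_x.
exact: renyi_argmax_stable a1 (distr _ _) (distr _ _) div_le bound.
Qed.
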